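(* For every step $h\in[H]$, every state $s\in\mathcal S$ and every $\boldsymbol\theta,\boldsymbol\theta'\in\mathbb R^d$, \[ |V^\star_h(\boldsymbol\theta,s)-V^\star_h(\boldsymbol\theta',s)|\le\sqrt d\,(H-h+1)\,\|\boldsymbol\theta-\boldsymbol\theta'\|_2 . \]
   Context: Episodic two-player zero-sum vector-valued Markov game: finite state space $\mathcal S$, finite action sets $\mathcal A,\mathcal B$, horizon $H$, transition kernels $P_h(\cdot\mid s,a,b)$, return functions $\mathbf r_h:\mathcal S\times\mathcal A\times\mathcal B\to[0,1]^d$. For $\boldsymbol\theta\in\mathbb R^d$ and policies $\mu$ (min-player) and $\nu$ (max-player), $V^{\mu,\nu}_h(\boldsymbol\theta,s)=\mathbb E_{\mu,\nu}[\sum_{l=h}^H\boldsymbol\theta\cdot\mathbf r_l(s_l,a_l,b_l)\mid s_h=s]$, and $V^\star_h(\boldsymbol\theta,s)=\min_\mu\max_\nu V^{\mu,\nu}_h(\boldsymbol\theta,s)$ is the minimax (Nash equilibrium) value of the scalarized game with reward $\boldsymbol\theta\cdot\mathbf r_h$. *)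

From HB Require Import structures.
From mathcomp Require Import all_boot all_order all_algebra.
From mathcomp Require Import classical_sets reals.
Set Implicit Arguments. Unset Strict Implicit. Unset Printing Implicit Defensive.
Import Order.TTheory GRing.Theory Num.Theory.
Local Open Scope ring_scope.
Local Open Scope classical_set_scope.

Section MarkovGame.
Variable R : realType.

Definition is_dist (T : finType) (p : {ffun T -> R}) : Prop :=
  (forall x, 0 <= p x) /\ \sum_(x : T) p x = 1.

Definition is_policy (S T : finType) (pi : nat -> S -> {ffun T -> R}) : Prop :=
  forall h s, is_dist (pi h s).

Variables (S A B : finType) (d H : nat).
Variable P : nat -> S -> A -> B -> {ffun S -> R}.
Variable r : nat -> S -> A -> B -> 'I_d -> R.

Definition scal_rew (theta : 'I_d -> R) (h : nat) (s : S) (a : A) (b : B) : R :=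
  \sum_(i < d) theta i * r h s a b i.

(* Value with n remaining steps, i.e. at step h = H - n + 1 (steps are
   1..H); Vrem 0 = 0 is V_{H+1} = 0.  This is the expectation
   E_{mu,nu}[ sum_{l=h}^H theta . r_l(s_l,a_l,b_l) | s_h = s ] computed
   stepwise. *)
Fixpoint Vrem (mu : nat -> S -> {ffun A -> R}) (nu : nat -> S -> {ffun B -> R})
  (theta : 'I_d -> R) (n : nat) (s : S) : R :=
  match n with
  | 0 => 0
  | n'.+1 =>
      let h := (H - n')%N in
      \sum_(a : A) \sum_(b : B) mu h s a * nu h s b *
        (scal_rew theta h s a b + \sum_(s' : S) P h s a b s' * Vrem mu nu theta n' s')
  end.

Definition Vpol mu nu (h : nat) (theta : 'I_d -> R) (s : S) : R :=
  Vrem mu nu theta (H.+1 - h) s.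

Definition Vstar (h : nat) (theta : 'I_d -> R) (s : S) : R :=
  inf [set x : R | exists mu, is_policy mu /\
        x = sup [set y : R | exists nu, is_policy nu /\ y = Vpol mu nu h theta s]].

End MarkovGame.

Definition norm2 (R : realType) (d : nat) (v : 'I_d -> R) : R :=
  Num.sqrt (\sum_(i < d) v i ^+ 2).

(* Scalarizing by theta is linear, so for fixed policies the value difference
   V^{mu,nu}(theta) - V^{mu,nu}(theta') is the value of the reward
   (theta - theta') . r, which is at most ||theta - theta'||_1 per step since
   r takes values in [0,1]^d; over the H - h + 1 remaining steps this gives
   (H - h + 1) ||theta - theta'||_1.  A uniform perturbation of size C moves
   both sup over nu and inf over mu by at most C, so the same bound holds for
   V^*, and Cauchy-Schwarz gives ||v||_1 <= sqrt d ||v||_2. *)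
From HB Require Import structures.
From mathcomp Require Import all_boot all_order all_algebra.
From mathcomp Require Import classical_sets reals.
From mathcomp Require Import boolp zify ring lra.
Import Order.TTheory GRing.Theory Num.Theory.
Local Open Scope ring_scope.
Local Open Scope classical_set_scope.

Section RealFacts.
Variable R : realType.

Lemma sqr_sum_le_card_sum_sqr d (a : 'I_d -> R) :
  (\sum_i a i) ^+ 2 <= d%:R * \sum_i a i ^+ 2.
Proof.
have sum_sqr_diff_ge0 : 0 <= \sum_i \sum_j (a i - a j) ^+ 2.
  by apply: sumr_ge0 => i _; apply: sumr_ge0 => j _; exact: sqr_ge0.
have lagrange : \sum_i \sum_j (a i - a j) ^+ 2 =
    (d%:R * \sum_i a i ^+ 2 - (\sum_i a i) ^+ 2) *+ 2.
  under eq_bigr => i _ do (under eq_bigr => j _ do rewrite sqrrB;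
     rewrite big_split /= sumrB sumr_const card_ord sumrMnl -mulr_sumr).
  rewrite big_split /= sumrB sumr_const card_ord !sumrMnl -mulr_suml.
  by rewrite -(mulr_natl (\sum_i a i ^+ 2)) !mulr2n; ring.
by move: sum_sqr_diff_ge0; rewrite lagrange -mulr_natl pmulr_rge0 ?ltr0n // subr_ge0.
Qed.

Lemma sum_norm_le_sqrt_card_norm2 d (v : 'I_d -> R) :
  \sum_i `|v i| <= Num.sqrt d%:R * norm2 v.
Proof.
rewrite /norm2 -sqrtrM ?ler0n //.
rewrite -[leLHS]ger0_norm ?sumr_ge0 // -sqrtr_sqr ler_wsqrtr //.
have -> : \sum_i v i ^+ 2 = \sum_i `|v i| ^+ 2.
  by apply: eq_bigr => i _; rewrite real_normK ?num_real.
exact: sqr_sum_le_card_sum_sqr.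
Qed.

Lemma norm_dist_avg_le (T : finType) (p : {ffun T -> R}) (f : T -> R) (c : R) :
  is_dist p -> (forall x, `|f x| <= c) -> `|\sum_x p x * f x| <= c.
Proof.
case=> p_ge0 p_sum1 f_le; apply: le_trans (ler_norm_sum _ _ _) _.
apply: le_trans (_ : \sum_x p x * c <= c); last by rewrite -mulr_suml p_sum1 mul1r.
by apply: ler_sum => x _; rewrite normrM ger0_norm // ler_wpM2l.
Qed.

Section SupInfImage.
Variables (T : Type) (X : T -> Prop).

Local Notation img u := [set y | exists x, X x /\ y = u x].

Lemma img_eq0 (u : T -> R) : ~ (exists x, X x) -> img u = set0.
Proof.
by move=> noX; apply/seteqP; split=> y // [x [Xx _]]; apply: noX; exists x.
Qed.

Lemma img_has_ubound (u : T -> R) M :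
  (forall x, X x -> `|u x| <= M) -> has_ubound (img u).
Proof.
by move=> u_le; exists M => _ [x [Xx ->]]; exact: le_trans (ler_norm _) (u_le _ Xx).
Qed.

Lemma norm_sup_img_le (u : T -> R) M : 0 <= M ->
  (forall x, X x -> `|u x| <= M) -> `|sup (img u)| <= M.
Proof.
move=> M_ge0 u_le; have [[x0 Xx0]|noX] := pselect (exists x, X x); last first.
  by rewrite img_eq0 // sup0 normr0.
have sup_le : sup (img u) <= M.
  apply: ge_sup; first by exists (u x0), x0.
  by move=> _ [x [Xx ->]]; exact: le_trans (ler_norm _) (u_le _ Xx).
have ux0_le : u x0 <= sup (img u).
  by apply: (ub_le_sup (img_has_ubound _ _ u_le)); exists x0.
by move: (u_le _ Xx0); rewrite !ler_norml => /andP[? ?]; apply/andP; split; lra.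
Qed.

Lemma sup_img_le_shift (u v : T -> R) C M :
  (forall x, X x -> u x <= v x + C) -> (forall x, X x -> `|v x| <= M) ->
  (exists x, X x) -> sup (img u) <= sup (img v) + C.
Proof.
move=> uv_le v_le [x0 Xx0]; apply: ge_sup; first by exists (u x0), x0.
move=> _ [x [Xx ->]]; apply: le_trans (uv_le _ Xx) _; rewrite lerD2r.
by apply: (ub_le_sup (img_has_ubound _ _ v_le)); exists x.
Qed.

Lemma norm_sup_img_sub_le (u v : T -> R) C M : 0 <= C ->
  (forall x, X x -> `|u x - v x| <= C) -> (forall x, X x -> `|u x| <= M) ->
  `|sup (img u) - sup (img v)| <= C.
Proof.
move=> C_ge0 uv_le u_le; have [exX|noX] := pselect (exists x, X x); last first.
  by rewrite !img_eq0 // subrr normr0.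
have v_le x : X x -> `|v x| <= M + C.
  move=> Xx; rewrite -[v x](subKr (u x)).
  by apply: le_trans (ler_normB _ _) _; rewrite lerD ?uv_le ?u_le.
have uv x : X x -> u x <= v x + C /\ v x <= u x + C.
  by move=> /uv_le; rewrite ler_norml => /andP[? ?]; split; lra.
have := sup_img_le_shift _ _ _ _ (fun x Xx => (uv x Xx).1) v_le exX.
have := sup_img_le_shift _ _ _ _ (fun x Xx => (uv x Xx).2) u_le exX.
by rewrite ler_norml => ? ?; apply/andP; split; lra.
Qed.

Lemma norm_inf_img_sub_le (u v : T -> R) C M : 0 <= C ->
  (forall x, X x -> `|u x - v x| <= C) -> (forall x, X x -> `|u x| <= M) ->
  `|inf (img u) - inf (img v)| <= C.
Proof.
move=> C_ge0 uv_le u_le.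
have oppr_img w : -%R @` img w = img (fun x => - w x).
  apply/seteqP; split=> y; first by move=> [_ [x [Xx ->]] <-]; exists x.
  by move=> [x [Xx ->]]; exists (w x) => //; exists x.
rewrite /inf !oppr_img -opprD normrN.
apply: (@norm_sup_img_sub_le _ _ C M) => // x Xx.
  by rewrite -opprD normrN uv_le.
by rewrite normrN u_le.
Qed.

End SupInfImage.
End RealFacts.

Section MarkovGameValues.
Context {R : realType} {S A B : finType} {d H : nat}
  {P : nat -> S -> A -> B -> {ffun S -> R}}
  {r : nat -> S -> A -> B -> 'I_d -> R}.
Hypothesis P_dist : forall h s a b, is_dist (P h s a b).
Hypothesis r_in01 : forall h s a b i, 0 <= r h s a b i <= 1.

Lemma VremB mu nu (theta theta' : 'I_d -> R) n s :
  Vrem H P r mu nu theta n s - Vrem H P r mu nu theta' n s =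
  Vrem H P r mu nu (fun i => theta i - theta' i) n s.
Proof.
elim: n s => [|n IH] s /=; first by rewrite subrr.
rewrite -sumrB; apply: eq_bigr => a _; rewrite -sumrB; apply: eq_bigr => b _.
rewrite -mulrBr opprD addrACA; congr (_ * (_ + _)).
  by rewrite /scal_rew -sumrB; apply: eq_bigr => i _; rewrite mulrBl.
by rewrite -sumrB; apply: eq_bigr => s' _; rewrite -mulrBr IH.
Qed.

Lemma norm_scal_rew_le (theta : 'I_d -> R) h s a b :
  `|scal_rew r theta h s a b| <= \sum_i `|theta i|.
Proof.
apply: le_trans (ler_norm_sum _ _ _) _; apply: ler_sum => i _.
have /andP[r_ge0 r_le1] := r_in01 h s a b i.
by rewrite normrM (ger0_norm r_ge0) ler_piMr.
Qed.

Lemma norm_Vrem_le mu nu (theta : 'I_d -> R) n s :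
  is_policy mu -> is_policy nu ->
  `|Vrem H P r mu nu theta n s| <= n%:R * \sum_i `|theta i|.
Proof.
move=> mu_pol nu_pol; elim: n s => [|n IH] s /=; first by rewrite normr0 mul0r.
under eq_bigr => a _ do (under eq_bigr => b _ do rewrite -mulrA; rewrite -mulr_sumr).
apply: norm_dist_avg_le => // a; apply: norm_dist_avg_le => // b.
apply: le_trans (ler_normD _ _) _; rewrite -nat1r mulrDl mul1r.
by rewrite lerD ?norm_scal_rew_le ?norm_dist_avg_le.
Qed.

Lemma norm_Vstar_sub_le h s (theta theta' : 'I_d -> R) :
  `|Vstar H P r h theta s - Vstar H P r h theta' s|
    <= (H.+1 - h)%:R * \sum_i `|theta i - theta' i|.
Proof.
set n := (H.+1 - h)%N; set M := n%:R * \sum_i `|theta i|.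
have C_ge0 : 0 <= n%:R * \sum_i `|theta i - theta' i| by rewrite mulr_ge0 ?sumr_ge0.
have Vpol_le mu nu : is_policy mu -> is_policy nu ->
    `|Vpol H P r mu nu h theta s| <= M.
  by move=> ? ?; exact: norm_Vrem_le.
apply: (@norm_inf_img_sub_le R _ _ _ _ _ M) => // [mu mu_pol|mu mu_pol].
  apply: (@norm_sup_img_sub_le R _ _ _ _ _ M) => // [nu nu_pol|nu nu_pol].
    by rewrite /Vpol VremB norm_Vrem_le.
  exact: Vpol_le.
by apply: norm_sup_img_le => [|nu nu_pol]; rewrite ?mulr_ge0 ?sumr_ge0 ?Vpol_le.
Qed.

End MarkovGameValues.

Theorem lemma7 (R : realType) (S A B : finType) (d H : nat)
  (P : nat -> S -> A -> B -> {ffun S -> R})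
  (r : nat -> S -> A -> B -> 'I_d -> R)
  (hP : forall h s a b, is_dist (P h s a b))
  (hr : forall h s a b i, 0 <= r h s a b i <= 1)
  (h : nat) (hh : (1 <= h <= H)%N) (s : S) (theta theta' : 'I_d -> R) :
  `| Vstar H P r h theta s - Vstar H P r h theta' s |
    <= Num.sqrt (d%:R) * (H - h + 1)%:R * norm2 (fun i => theta i - theta' i).
Proof.
have -> : (H - h + 1 = H.+1 - h)%N by lia.
apply: le_trans (norm_Vstar_sub_le hP hr h s theta theta') _.
rewrite [leRHS]mulrAC [leLHS]mulrC ler_wpM2r //.
exact: sum_norm_le_sqrt_card_norm2.
Qed.
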